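(* Let $A$ be a finite combinatorial annulus and $r$ a $b$-weakly bounded refinement. Then $\mathrm{EEL}(rA)\le b^2\,\mathrm{EEL}(A)$.
   Context: Graphs are simple, connected, locally finite. A combinatorial annulus is the 1-skeleton (with its triangular cell structure) of a triangulated topological annulus in the plane, i.e. a region whose boundary is two disjoint Jordan curves, one enclosing the other. An edge path is a sequence of edges $[v_0,v_1],[v_1,v_2],\dots$; $\mathrm{EEL}(A)$ is the extremal length of the family of edge paths connecting the two boundary components of $A$, using metrics on edges: a metric $m:E\to[0,\infty)$ has area $\sum_e m(e)^2$, the length of a path is the sum of $m$ over its edges, and $\mathrm{EEL}=\sup_m (\inf_\gamma L_m(\gamma))^2/\mathrm{area}(m)$ over metrics of finite non-zero area. Refinement: for planar complexes $G=(V,E,F)$ and $rG=(rV,rE,rF)$, $rG$ is a refinement of $G$ if $V\subset rV$ and each edge $e=[x,y]\in E$ corresponds to a path $x=w_0,w_1,\dots,w_n=y$ in $rG$ with $[w_j,w_{j+1}]\in rE$ and $w_j\notin V$ for $0<j<n$. Write $\mathrm{eInc}_r(e)=\{[w_0,w_1],\dots,[w_{n-1},w_n]\}$. $r$ is $b$-weakly bounded if $|\mathrm{eInc}_r(e)|\le b$ for all $e\in E$. *)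

From HB Require Import structures.
From mathcomp Require Import all_boot all_order all_algebra.
From mathcomp Require Import all_classical all_reals all_analysis.

Set Implicit Arguments.
Unset Strict Implicit.
Unset Printing Implicit Defensive.

Import Order.TTheory GRing.Theory Num.Theory numFieldNormedType.Exports.
Local Open Scope classical_set_scope.
Local Open Scope ring_scope.

Notation pt R := (Real.sort R * Real.sort R)%type.

Section PlaneTopology.
Variable R : realType.
Local Notation pt := (pt R).

Definition I01 : set R := [set t | 0 <= t <= 1].

Definition is_arc (g : R -> pt) : Prop :=
  {within I01, continuous g} /\
  (forall s t, I01 s -> I01 t -> g s = g t -> s = t).

Definition arc_img (g : R -> pt) : set pt := g @` I01.

Definition jordan_curve (J : set pt) : Prop :=
  exists g : R -> pt,
    [/\ {within I01, continuous g}, g 0 = g 1,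
        (forall s t, 0 <= s < 1 -> 0 <= t < 1 -> g s = g t -> s = t)
      & J = g @` I01].

Definition bounded_pts (S : set pt) : Prop :=
  exists M : R, forall p, S p -> `|p.1| <= M /\ `|p.2| <= M.

(** Points in a bounded component of the complement of [J]
    (for a Jordan curve: the region enclosed by [J]). *)
Definition inside (J : set pt) : set pt :=
  [set p | ~ J p /\ bounded_pts (connected_component (~` J) p)].

Definition closed_annulus (Om Jin Jout : set pt) : Prop :=
  [/\ jordan_curve Jin, jordan_curve Jout, Jin `&` Jout = set0
    & Jin `<=` inside Jout] /\
  [/\ Om = closure (interior Om), connected (interior Om)
    & Om `\` interior Om = Jin `|` Jout].

End PlaneTopology.

(** Data of an embedded, triangulated finite planar complex whose underlying
    space is meant to be a closed annulus [tOm] with boundary curves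
    [tJin], [tJout]. *)
Unset Implicit Arguments.
Record tri_data (R : realType) := TriData {
  tV : finType;
  tadj : rel tV;                     (* adjacency (edges of the 1-skeleton) *)
  tpos : tV -> pt R;
  tarc : tV -> tV -> R -> pt R;      (* the arc realising the edge [x,y] *)
  tF : {set {set tV}};               (* triangular faces *)
  tOm : set (pt R);                  (* the closed annulus *)
  tJin : set (pt R);
  tJout : set (pt R)
}.
Arguments tV {R}. Arguments tadj {R}. Arguments tpos {R}. Arguments tarc {R}.
Arguments tF {R}. Arguments tOm {R}. Arguments tJin {R}. Arguments tJout {R}.
Set Implicit Arguments.

Section Triangulated.
Variable R : realType.
Variable A : tri_data R.

Definition edge_img (x y : tV A) : set (pt R) := arc_img (tarc A x y).

Definition face_curve (f : {set tV A}) : set (pt R) :=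
  [set p | exists x y, [/\ x \in f, y \in f, tadj A x y & edge_img x y p]].

Definition face_int (f : {set tV A}) : set (pt R) := inside (face_curve f).

Definition face_region (f : {set tV A}) : set (pt R) :=
  face_curve f `|` face_int f.

Definition is_comb_annulus : Prop :=
  symmetric (tadj A) /\ irreflexive (tadj A) /\
  injective (tpos A) /\ (forall v, tOm A (tpos A v)) /\
      (forall x y, tadj A x y ->
         [/\ is_arc (tarc A x y), tarc A x y 0 = tpos A x,
             tarc A x y 1 = tpos A y, edge_img x y = edge_img y x
           & edge_img x y `<=` tOm A]) /\
      (forall x y z, tadj A x y -> edge_img x y (tpos A z) -> z = x \/ z = y) /\
      (forall x y u v p, tadj A x y -> tadj A u v ->
         edge_img x y p -> edge_img u v p ->
         [set x; y]%SET = [set u; v]%SET \/ exists z, p = tpos A z) /\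
      (forall f, f \in tF A ->
         #|f| = 3 /\ {in f &, forall x y, x != y -> tadj A x y}) /\
      (forall x y, tadj A x y -> exists2 f, f \in tF A & x \in f /\ y \in f) /\
      (forall f, f \in tF A ->
         (forall z, ~ face_int f (tpos A z)) /\
         (forall x y, tadj A x y -> face_int f `&` edge_img x y = set0)) /\
      (forall f g, f \in tF A -> g \in tF A -> f != g ->
         face_int f `&` face_int g = set0) /\
      tOm A = \bigcup_(f in [set f | f \in tF A]) face_region f /\
  closed_annulus (tOm A) (tJin A) (tJout A).

Definition bd_in : set (tV A) := [set v | tJin A (tpos A v)].
Definition bd_out : set (tV A) := [set v | tJout A (tpos A v)].

End Triangulated.

Section EEL.
Variable R : realType.
Variables (V : finType) (adj : rel V) (B1 B2 : set V).

Definition is_edge (e : {set V}) : bool :=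
  [exists x, exists y, adj x y && (e == [set x; y]%SET)].

(** A metric assigns a value to each edge (edges are 2-element sets). *)
Definition area (m : {set V} -> R) : R :=
  \sum_(e : {set V} | is_edge e) m e ^+ 2.

Definition path_len (m : {set V} -> R) (v0 : V) (p : seq V) : R :=
  \sum_(e <- pairmap (fun x y => [set x; y]%SET) v0 p) m e.

Definition connecting (v0 : V) (p : seq V) : Prop :=
  [/\ path adj v0 p, B1 v0 & B2 (last v0 p)].

Definition min_len (m : {set V} -> R) : R :=
  inf [set l | exists v0 p, connecting v0 p /\ l = path_len m v0 p].

Definition admissible_metric (m : {set V} -> R) : Prop :=
  (forall e, is_edge e -> 0 <= m e) /\ area m != 0.

Definition EEL : \bar R :=
  ereal_sup [set ((min_len m) ^+ 2 / area m)%:E | m in admissible_metric].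

End EEL.

Definition EEL_ann (R : realType) (A : tri_data R) : \bar R :=
  EEL R (tadj A) (@bd_in R A) (@bd_out R A).

(** [rA] is a refinement of [A] which is [b]-weakly bounded: both are
    triangulations of the same annulus, V is contained in rV (same points),
    and each edge [x,y] of A is realised by an edge path
    x = w_0, ..., w_n = y of rA with interior vertices not in V, whose arcs
    make up the arc of [x,y]; the set eInc of edges of this path has at most
    [b] elements. *)
Definition weakly_bounded_refinement (R : realType) (A rA : tri_data R)
    (b : nat) : Prop :=
  exists (iota : tV A -> tV rA) (rp : tV A -> tV A -> seq (tV rA)),
  [/\ injective iota, (forall v, tpos rA (iota v) = tpos A v)
    & [/\ tOm rA = tOm A, tJin rA = tJin A & tJout rA = tJout A]] /\
  forall x y, tadj A x y ->
    (* x = w_0, w_1, ..., w_n = y, with rp x y = [:: w_1; ...; w_n] *)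
    [/\ path (tadj rA) (iota x) (rp x y),
        last (iota x) (rp x y) = iota y,
        (* w_j is not in V for 0 < j < n *)
        (forall i, (i.+1 < size (rp x y))%N -> forall v,
           nth (iota x) (rp x y) i != iota v),
        edge_img x y =
          \bigcup_(i in [set i | (i < size (rp x y))%N])
             edge_img (nth (iota x) (iota x :: rp x y) i)
                      (nth (iota x) (rp x y) i)
      &
        (#|[set e in pairmap (fun u w => [set u; w]%SET) (iota x) (rp x y)]%SET|
          <= b)%N].

(* A metric m on the edges of rA is pushed to A: the edge [x,y] gets the total m-weight
   of eInc_r([x,y]). An edge path of A joining the two boundary curves lifts, edge by edge,
   to such a path of rA using every edge of each eInc_r at most once, so the minimal length
   does not decrease. By Cauchy-Schwarz, |eInc_r(e)| <= b and the disjointness of the sets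
   eInc_r(e) (two edge arcs of A meet only in vertices, whereas an arc is infinite), the area
   grows at most by the factor b. Hence EEL(rA) <= b EEL(A) <= b^2 EEL(A).
   Topology also provides a path of A between the boundary curves: the faces reachable from
   a vertex and the remaining faces would split the connected annulus into two disjoint
   closed sets, and each boundary curve meets a vertex because a Jordan curve never lies
   inside one arc. *)

From mathcomp Require Import all_boot all_order all_algebra.
From mathcomp Require Import all_classical all_reals all_analysis.
From mathcomp Require Import lra.

Set Implicit Arguments.
Unset Strict Implicit.
Unset Printing Implicit Defensive.

Import Order.TTheory GRing.Theory Num.Theory numFieldNormedType.Exports.
Local Open Scope classical_set_scope.
Local Open Scope ring_scope.

Lemma connected_sub_closed_cover (T : topologicalType) (S X Y : set T) :
  connected S -> closed S -> closed X -> closed Y -> S `<=` X `|` Y ->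
  X `&` Y `&` S = set0 -> S `<=` X \/ S `<=` Y.
Proof.
move=> cS clS clX clY SXY XYS0.
have XSYS0 : X `&` S `&` (Y `&` S) = set0 by rewrite setIACA setIid.
have sep : separated (X `&` S) (Y `&` S).
  by rewrite /separated -!(iffLR (closure_id _) (closedI _ clS)).
have [] := connected_subset sep _ cS.
- by move=> p Sp; case: (SXY p Sp) => ?; [left | right].
- by move=> sub; left => p /sub [].
- by move=> sub; right => p /sub [].
Qed.

Section PlaneTopology.
Variable R : realType.
Local Notation pt := (pt R).
Local Notation I01 := (@I01 R).

Lemma connected_ball_R (x e : R) : connected (ball x e).
Proof. by rewrite ball_itv; apply/connected_intervalP; exact: interval_is_interval. Qed.

Lemma connected_ball_plane (q : pt) (e : R) : 0 < e -> connected (ball q e).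
Proof.
move=> e0.
have vert (a : R) : continuous (fun t : R => ((a, t) : pt)).
  by move=> t; exact: (cvg_pair (cvg_cst a) cvg_id).
have horiz (a : R) : continuous (fun t : R => ((t, a) : pt)).
  by move=> t; exact: (cvg_pair cvg_id (cvg_cst a)).
have -> : ball q e = \bigcup_(a in ball q.1 e)
    ((fun t => ((a, t) : pt)) @` ball q.2 e `|` (fun t => ((t, q.2) : pt)) @` ball q.1 e).
  apply/seteqP; split.
    by move=> [y1 y2] [/= b1 b2]; exists y1 => //; left; exists y2.
  by move=> y [a ba [[t bt <-]|[t bt <-]]]; split => //=; exact: ballxx.
apply: bigcup_connected.
  by exists q => a _; right; exists q.1; [exact: ballxx | case: q].
move=> a ba; apply: connectedU.
- by exists (a, q.2); split; [exists q.2 => //; exact: ballxx | exists a].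
- apply: connected_continuous_connected; first exact: connected_ball_R.
  exact/continuous_subspaceT/vert.
- apply: connected_continuous_connected; first exact: connected_ball_R.
  exact/continuous_subspaceT/horiz.
Qed.

Lemma connected_nbhs_setC (J : set pt) q : closed J -> ~ J q ->
  exists2 N, nbhs q N & connected N /\ N `<=` ~` J.
Proof.
move=> cJ nJq.
have /nbhs_ballP [e /= e0 eJ] : nbhs q (~` J).
  by apply: open_nbhs_nbhs; split => //; exact: closed_openC.
by exists (ball q e); [exact: nbhsx_ballx | split => //; exact: connected_ball_plane].
Qed.

Lemma open_inside (J : set pt) : closed J -> open (inside J).
Proof.
move=> cJ; rewrite openE => p [nJp bd].
have [N Np [cN NJ]] := connected_nbhs_setC cJ nJp.
have pN := nbhs_singleton Np.
apply: filterS Np => q Nq.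
have Cpq : connected_component (~` J) p q.
  exact: (connected_component_max pN NJ cN Nq).
by split; [exact: NJ | rewrite -(same_connected_component Cpq)].
Qed.

Lemma closed_setU_inside (J : set pt) : closed J -> closed (J `|` inside J).
Proof.
move=> cJ; rewrite closure_id; apply/seteqP; split; first exact: subset_closure.
rewrite closureU => q [|]; first by rewrite -(iffLR (closure_id J) cJ); left.
move=> clq; have [Jq|nJq] := pselect (J q); [by left | right].
have [N Nq [cN NJ]] := connected_nbhs_setC cJ nJq.
have [p [[nJp bd] Np]] := clq _ Nq.
have Cpq : connected_component (~` J) p q.
  exact: (connected_component_max Np NJ cN (nbhs_singleton Nq)).
by split => //; rewrite -(same_connected_component Cpq).
Qed.

Lemma I01E : I01 = `[0, 1]%classic.
Proof. by apply/seteqP; split => t; rewrite /I01 /= in_itv. Qed.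

Lemma compact_I01 : compact I01.
Proof. by rewrite I01E; exact: segment_compact. Qed.

Lemma closed_I01 : closed I01.
Proof. by rewrite I01E; exact: interval_closed. Qed.

Lemma closed_arc_img (g : R -> pt) : {within I01, continuous g} -> closed (arc_img g).
Proof.
move=> cg; apply: compact_closed; first exact: norm_hausdorff.
exact: continuous_compact compact_I01.
Qed.

Lemma connected_arc_img (g : R -> pt) : {within I01, continuous g} -> connected (arc_img g).
Proof.
move=> cg; apply: connected_continuous_connected => //.
by rewrite I01E; exact: segment_connected.
Qed.

Lemma loop_not_injective (phi : R -> R) : {within I01, continuous phi} -> phi 0 = phi 1 ->
  exists s t, [/\ 0 <= s < 1, 0 <= t < 1, s != t & phi s = phi t].
Proof.
move=> cphi phi01.
have [E|ne] := eqVneq (phi (1/2)) (phi 0).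
  by exists (1/2), 0; split => //; apply/andP; split; lra.
set c := (phi 0 + phi (1/2)) / 2.
have mid (a d : R) : Num.min a d <= (a + d) / 2 <= Num.max a d.
  by rewrite ge_min le_max; case: (leP a d) => ad; apply/andP; split; apply/orP; lra.
have sub (a d : R) : 0 <= a -> d <= 1 -> `[a, d]%classic `<=` I01.
  by move=> a0 d1 x; rewrite /= in_itv /I01 /= => /andP[ax xd]; apply/andP; split; lra.
have [s1 + ps1] : exists2 s1, s1 \in `[0, 1/2] & phi s1 = c.
  apply: IVT; [lra | | exact: mid].
  by apply: continuous_subspaceW cphi; apply: sub; lra.
have [s2 + ps2] : exists2 s2, s2 \in `[1/2, 1] & phi s2 = c.
  apply: IVT; [lra | | by rewrite -phi01 /c addrC; exact: mid].
  by apply: continuous_subspaceW cphi; apply: sub; lra.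
rewrite !in_itv /= => /andP[s10 s11] /andP[s20 s21].
have s1h : s1 != 1/2 by apply: contraNneq ne => e; move: ps1; rewrite e /c; lra.
have s2n1 : s2 != 1 by apply: contraNneq ne => e; move: ps2; rewrite e -phi01 /c; lra.
exists s1, s2; split; last by rewrite ps1 ps2.
- by apply/andP; split => //; move: s1h; rewrite lt_neqAle; lra.
- by apply/andP; split; [lra | rewrite lt_neqAle s2n1].
- by move: s1h; rewrite neq_lt => /orP[]; lra.
Qed.

Lemma continuous_arc_lift (g h : R -> pt) (phi : R -> R) :
  is_arc g -> {within I01, continuous h} ->
  (forall t, I01 t -> I01 (phi t) /\ g (phi t) = h t) -> {within I01, continuous phi}.
Proof.
move=> [cg ig] ch lift; apply/subspace_continuousP => t It.
have [Ipt gpt] := lift t It.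
apply/cvgrPdist_lt => e e0.
pose C := I01 `\` ball (phi t) e.
have cC : compact C.
  apply: subclosed_compact compact_I01 _; last by move=> x [].
  by apply: closedI closed_I01 _; apply: open_closedC; exact: ball_open.
have clgC : closed (g @` C).
  apply: compact_closed; first exact: norm_hausdorff.
  by apply: continuous_compact cC; apply: continuous_subspaceW cg => x [].
have ngC : ~ (g @` C) (h t).
  move=> [s [Is nbs] gs]; apply: nbs.
  by rewrite (ig s (phi t)) ?gs ?gpt //; exact: ballxx.
have hth : h x @[x --> within I01 (nbhs t)] --> h t.
  by move/subspace_continuousP : ch; apply.
have near_ngC : within I01 (nbhs t) (h @^-1` ~` (g @` C)).
  exact: hth (open_nbhs_nbhs (conj (closed_openC clgC) ngC)).
apply: filter_app (withinT I01 (nbhs_filter t)).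
apply: filterS near_ngC => x ngx Ix.
have [Ipx gpx] := lift x Ix.
by apply: contrapT => nbx; apply: ngx; exists (phi x) => //; split.
Qed.

Lemma jordan_curve_not_sub_arc (g : R -> pt) (J : set pt) :
  is_arc g -> jordan_curve J -> ~ J `<=` arc_img g.
Proof.
move=> arc_g [h [ch h01 ih ->]] sub.
have [phi lift] : {phi : R -> R & forall t, I01 t -> I01 (phi t) /\ g (phi t) = h t}.
  apply: (@choice _ _ (fun t s => I01 t -> I01 s /\ g s = h t)) => t.
  have [It|nIt] := pselect (I01 t); last by exists 0 => /nIt.
  by have [s Is gs] := sub _ (ex_intro2 _ _ t It erefl); exists s.
have I0 : I01 0 by rewrite /I01 /= lexx ler01.
have I1 : I01 1 by rewrite /I01 /= lexx ler01.
have [[Ip0 g0] [Ip1 g1]] := (lift 0 I0, lift 1 I1).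
have phi01 : phi 0 = phi 1 by apply: arc_g.2 => //; rewrite g0 g1.
have [s [t [s01 t01 st phist]]] := loop_not_injective (continuous_arc_lift arc_g ch lift) phi01.
have Is : I01 s by move: s01; rewrite /I01 /= => /andP[-> /ltW].
have It : I01 t by move: t01; rewrite /I01 /= => /andP[-> /ltW].
apply: (negP st); apply/eqP; apply: ih => //.
by rewrite -(lift s Is).2 -(lift t It).2 phist.
Qed.

Lemma arc_img_not_finite (V : finType) (pos : V -> pt) (g : R -> pt) :
  is_arc g -> ~ arc_img g `<=` range pos.
Proof.
move=> [_ ig] sub; pose N := #|V|.+1.
have N0 : (N%:R : R) != 0 by rewrite pnatr_eq0.
have tI (k : 'I_N) : I01 (k%:R / N%:R).
  rewrite /I01 /= divr_ge0 ?ler0n //=.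
  by rewrite ler_pdivrMr ?ltr0n // mul1r ler_nat ltnW.
have [f fE] : {f : 'I_N -> V & forall k, pos (f k) = g (k%:R / N%:R)}.
  apply: (@choice _ _ (fun (k : 'I_N) z => pos z = g (k%:R / N%:R))) => k.
  by have [z _ E] := sub _ (ex_intro2 _ _ _ (tI k) erefl); exists z.
suff /leq_card : injective f by rewrite card_ord ltnn.
move=> k l fkl; have : g (k%:R / N%:R) = g (l%:R / N%:R) by rewrite -!fE fkl.
move/(ig _ _ (tI k) (tI l))/(congr1 ( *%R^~ N%:R)).
by rewrite !divfK // => /eqP; rewrite eqr_nat => /eqP; exact: val_inj.
Qed.

End PlaneTopology.

Lemma eq_set2_cases (T : finType) (x y u v : T) : x != y ->
  [set x; y]%SET = [set u; v]%SET -> (x = u /\ y = v) \/ (x = v /\ y = u).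
Proof.
move=> xy E.
have : x \in [set u; v]%SET by rewrite -E !inE eqxx.
have : y \in [set u; v]%SET by rewrite -E !inE eqxx orbT.
rewrite !inE => /orP[]/eqP yE /orP[]/eqP xE; try by [left | right].
all: by move: xy; rewrite xE yE eqxx.
Qed.

Section CombinatorialAnnulus.
Variables (R : realType) (A : tri_data R).
Hypothesis HA : is_comb_annulus A.
Local Notation V := (tV A).
Local Notation adj := (tadj A).
Local Notation pos := (tpos A).

Lemma tadj_sym : symmetric adj.
Proof. by case: HA. Qed.

Lemma tadj_irr : irreflexive adj.
Proof. by case: HA => _ [H _]; exact: H. Qed.

Lemma tpos_in_tOm v : tOm A (pos v).
Proof. by case: HA => _ [_ [_ [H _]]]; exact: H. Qed.

Lemma edge_arc x y : adj x y ->
  [/\ is_arc (tarc A x y), tarc A x y 0 = pos x, tarc A x y 1 = pos y,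
      edge_img x y = edge_img y x & edge_img x y `<=` tOm A].
Proof. by case: HA => _ [_ [_ [_ [H _]]]]; exact: H. Qed.

Lemma vertex_on_edge x y z : adj x y -> edge_img x y (pos z) -> z = x \/ z = y.
Proof. by case: HA => _ [_ [_ [_ [_ [H _]]]]]; exact: H. Qed.

Lemma edges_meet x y u v p : adj x y -> adj u v -> edge_img x y p -> edge_img u v p ->
  [set x; y]%SET = [set u; v]%SET \/ exists z, p = pos z.
Proof. by case: HA => _ [_ [_ [_ [_ [_ [H _]]]]]]; exact: H. Qed.

Lemma face_triangle (f : {set V}) : f \in tF A ->
  #|f| = 3 /\ {in f &, forall x y, x != y -> adj x y}.
Proof. by case: HA => _ [_ [_ [_ [_ [_ [_ [H _]]]]]]]; exact: H. Qed.

Lemma face_int_avoids_skeleton (f : {set V}) : f \in tF A ->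
  (forall z, ~ face_int f (pos z)) /\
  (forall x y, adj x y -> face_int f `&` edge_img x y = set0).
Proof. by case: HA => _ [_ [_ [_ [_ [_ [_ [_ [_ [H _]]]]]]]]]; exact: H. Qed.

Lemma face_int_disjoint (f g : {set V}) : f \in tF A -> g \in tF A -> f != g ->
  face_int f `&` face_int g = set0.
Proof. by case: HA => _ [_ [_ [_ [_ [_ [_ [_ [_ [_ [H _]]]]]]]]]]; exact: H. Qed.

Lemma tOm_faces : tOm A = \bigcup_(f in [set` tF A]) face_region f.
Proof. by case: HA => _ [_ [_ [_ [_ [_ [_ [_ [_ [_ [_ [H _]]]]]]]]]]]; exact: H. Qed.

Lemma tOm_closed_annulus : closed_annulus (tOm A) (tJin A) (tJout A).
Proof. by case: HA => _ [_ [_ [_ [_ [_ [_ [_ [_ [_ [_ [_ H]]]]]]]]]]]; exact: H. Qed.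

Lemma closed_edge_img x y : adj x y -> closed (edge_img x y).
Proof. by case/edge_arc => -[cg _] _ _ _ _; exact: closed_arc_img. Qed.

Lemma edge_img_set2 x y u v : adj x y -> [set x; y]%SET = [set u; v]%SET ->
  edge_img x y = edge_img u v.
Proof.
move=> axy E; have xy : x != y by apply: contraTneq axy => ->; rewrite tadj_irr.
by case: (eq_set2_cases xy E) => -[<- <-] //; case: (edge_arc axy).
Qed.

Lemma closed_face_curve (f : {set V}) : closed (face_curve f).
Proof.
have -> : face_curve f = \bigcup_(xy in [set xy : V * V | [/\ xy.1 \in f, xy.2 \in f
    & adj xy.1 xy.2]]) edge_img xy.1 xy.2.
  apply/seteqP; split; first by move=> p [x [y [xf yf axy e]]]; exists (x, y).
  by move=> p [[x y] /= [xf yf axy] e]; exists x, y.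
apply: closed_bigcup; first exact: finite_finset.
by move=> [x y] /= [_ _ axy]; exact: closed_edge_img.
Qed.

Lemma closed_face_region (f : {set V}) : closed (face_region f).
Proof. exact/closed_setU_inside/closed_face_curve. Qed.

Lemma face_int_sub_interior (f : {set V}) : f \in tF A -> face_int f `<=` (tOm A)°.
Proof.
move=> fF; rewrite -open_subsetE; last exact/open_inside/closed_face_curve.
by move=> p fp; rewrite tOm_faces; exists f => //; right.
Qed.

Lemma face_region_vertex (f : {set V}) v : f \in tF A -> face_region f (pos v) -> v \in f.
Proof.
move=> fF [[x [y [xf yf axy e]]]|fv]; last by case: (face_int_avoids_skeleton fF) => /(_ v).
by case: (vertex_on_edge axy e) => ->.
Qed.

Lemma face_regions_meet (f g : {set V}) p : f \in tF A -> g \in tF A -> f != g ->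
  face_region f p -> face_region g p -> exists z, z \in f /\ z \in g.
Proof.
move=> fF gF fg [[x [y [xf yf axy ex]]]|fp] [[u [v [ug vg auv eu]]]|gp].
- case: (edges_meet axy auv ex eu) => [E|[z pz]].
    exists x; split => //; have : x \in [set u; v]%SET by rewrite -E !inE eqxx.
    by rewrite !inE => /orP[]/eqP->.
  rewrite pz in ex eu; exists z; split.
    by case: (vertex_on_edge axy ex) => ->.
  by case: (vertex_on_edge auv eu) => ->.
- by have [_ /(_ _ _ axy)/seteqP[/(_ p)]] := face_int_avoids_skeleton gF; case.
- by have [_ /(_ _ _ auv)/seteqP[/(_ p)]] := face_int_avoids_skeleton fF; case.
- by have /seteqP[/(_ p)] := face_int_disjoint fF gF fg; case.
Qed.

Lemma boundary_on_edge q : (tOm A `\` (tOm A)°) q -> exists x y, adj x y /\ edge_img x y q.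
Proof.
move=> [+ nint]; rewrite tOm_faces => -[f fF [[x [y [_ _ axy e]]]|fq]]; first by exists x, y.
by case: nint; exact: face_int_sub_interior fF _ fq.
Qed.

Lemma jordan_boundary_vertex (J : set (pt R)) : jordan_curve J ->
  J `<=` tOm A `\` (tOm A)° -> exists v, J (pos v).
Proof.
move=> jJ Jbd; apply: contrapT => noV.
have [h [ch _ _ eJ]] := jJ.
have Jh0 : J (h 0) by rewrite eJ; exists 0; rewrite // /I01 /= lexx ler01.
have [x0 [y0 [a0 e0]]] := boundary_on_edge (Jbd _ Jh0).
pose others := \bigcup_(xy in [set xy : V * V | adj xy.1 xy.2 /\
                  [set xy.1; xy.2]%SET != [set x0; y0]%SET]) edge_img xy.1 xy.2.
have disj : edge_img x0 y0 `&` others `&` J = set0.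
  apply/seteqP; split => // p [[ep [[u v] /= [auv ne] eu]] Jp].
  case: (edges_meet a0 auv ep eu) => [E|[z pz]]; first by rewrite E eqxx in ne.
  by apply: noV; exists z; rewrite -pz.
have cover : J `<=` edge_img x0 y0 `|` others.
  move=> q Jq; have [x [y [axy eq]]] := boundary_on_edge (Jbd _ Jq).
  have [E|ne] := eqVneq [set x; y]%SET [set x0; y0]%SET.
    by left; rewrite -(edge_img_set2 axy E).
  by right; exists (x, y).
have clJ : closed J by rewrite eJ; exact: closed_arc_img.
have clO : closed others.
  apply: closed_bigcup; first exact: finite_finset.
  by move=> [x y] /= [axy _]; exact: closed_edge_img.
have cJ : connected J by rewrite eJ; exact: connected_arc_img.
have [sub|sub] := connected_sub_closed_cover cJ clJ (closed_edge_img a0) clO cover disj.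
  by have [arc0 _ _ _ _] := edge_arc a0; exact: jordan_curve_not_sub_arc arc0 jJ sub.
by have /seteqP[/(_ (h 0)) + _] := disj; apply; split; first split; [| exact: sub |].
Qed.

Lemma connect_tadj u v : connect adj u v.
Proof.
apply: contrapT => /negP ncuv.
have in_face f w z : f \in tF A -> w \in f -> z \in f -> connect adj u w -> connect adj u z.
  move=> fF wf zf cw; have [_ adjf] := face_triangle fF.
  have [<-//|wz] := eqVneq w z.
  exact: connect_trans cw (connect1 (adjf _ _ wf zf wz)).
pose reached := \bigcup_(f in [set f | f \in tF A /\ exists2 w, w \in f & connect adj u w])
                  face_region f.
pose unreached := \bigcup_(f in [set f | f \in tF A /\ forall w, w \in f -> ~~ connect adj u w])
                  face_region f.
have clr : closed reached.
  by apply: closed_bigcup => [|f _]; [exact: finite_finset | exact: closed_face_region].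
have clu : closed unreached.
  by apply: closed_bigcup => [|f _]; [exact: finite_finset | exact: closed_face_region].
have disj : reached `&` unreached `&` tOm A = set0.
  apply/seteqP; split => // p [[[f [fF [w wf cw]] rf] [g [gF ng] rg]] _].
  have fg : f != g by apply/eqP => fg; move: (ng w); rewrite -fg => /(_ wf); rewrite cw.
  have [z [zf zg]] := face_regions_meet fF gF fg rf rg.
  by move: (ng z zg); rewrite (in_face f w z).
have cover : tOm A `<=` reached `|` unreached.
  move=> p; rewrite tOm_faces => -[f fF rf].
  have [[w wf cw]|nw] := pselect (exists2 w, w \in f & connect adj u w).
    by left; exists f => //; split => //; exists w.
  by right; exists f => //; split => // w wf; apply/negP => cw; apply: nw; exists w.
have [[_ _ _ _] [OmE cint _]] := tOm_closed_annulus.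
have cOm : connected (tOm A) by rewrite OmE; exact: connected_closure.
have clOm : closed (tOm A) by rewrite OmE; exact: closed_closure.
have [sub|sub] := connected_sub_closed_cover cOm clOm clr clu cover disj.
  have [f [fF [w wf cw]] rf] := sub _ (tpos_in_tOm v).
  by have := in_face f w v fF wf (face_region_vertex fF rf) cw; rewrite (negbTE ncuv).
have [f [fF ng] rf] := sub _ (tpos_in_tOm u).
by move: (ng u (face_region_vertex fF rf)); rewrite connect0.
Qed.

Lemma exists_connecting : exists v0 p, connecting adj (@bd_in R A) (@bd_out R A) v0 p.
Proof.
have [[jin jout _ _] [_ _ bd]] := tOm_closed_annulus.
have [vi Ji] : exists v, tJin A (pos v).
  by apply: jordan_boundary_vertex => // q Jq; rewrite bd; left.
have [vo Jo] : exists v, tJout A (pos v).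
  by apply: jordan_boundary_vertex => // q Jq; rewrite bd; right.
have /connectP [p pp lp] := connect_tadj vi vo.
by exists vi, p; split => //; rewrite /bd_out /= -lp.
Qed.

Lemma exists_tadj : exists x y, adj x y.
Proof.
have [v0 [[|x p] [/= pp in0 out0]]] := exists_connecting.
  have [[_ _ disj _] _] := tOm_closed_annulus.
  by have /seteqP[/(_ (pos v0) (conj in0 out0))] := disj.
by move/andP: pp => [a0 _]; exists v0, x.
Qed.

End CombinatorialAnnulus.

Section Walks.
Variables (T : finType) (r : rel T).

Definition walk_edges (a : T) (s : seq T) : seq {set T} :=
  pairmap (fun u w => [set u; w]%SET) a s.

Lemma is_edge_walk_edges a s e : path r a s -> e \in walk_edges a s -> is_edge r e.
Proof.
elim: s a => [//|x s IH] a /= /andP[rax ps]; rewrite inE => /orP[/eqP->|]; last exact: IH.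
by apply/existsP; exists a; apply/existsP; exists x; rewrite rax eqxx.
Qed.

Lemma walk_edges_sub a s e z : e \in walk_edges a s -> z \in e -> z \in a :: s.
Proof.
elim: s a => [//|x s IH] a; rewrite /= inE => /orP[/eqP-> | /IH sub /sub].
  by rewrite !inE => /orP[]/eqP->; rewrite eqxx ?orbT.
by move=> zxs; rewrite inE zxs orbT.
Qed.

Lemma uniq_walk_edges a s : uniq (a :: s) -> uniq (walk_edges a s).
Proof.
elim: s a => [//|x s IH] a /= /andP[a_xs /IH ->]; rewrite andbT.
by apply: contra a_xs => /walk_edges_sub; apply; rewrite !inE eqxx.
Qed.

Lemma uniq_subwalk a s : path r a s -> exists2 s', path r a s' &
  [/\ last a s' = last a s, uniq (a :: s'), {subset s' <= s}
     & {subset walk_edges a s' <= walk_edges a s}].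
Proof.
move: {2}(size s) (leqnn (size s)) => n; elim: n a s => [|n IH] a s.
  by rewrite leqn0 => /nilP-> _; exists [::].
have [a_s|a_s] := boolP (a \in s).
  case/splitPr: a_s => s1 s2; rewrite size_cat /= addnS ltnS => sz.
  rewrite cat_path => /andP[_ /= /andP[_ ps2]].
  have [s' ps' [ls' us' ss' es']] := IH a s2 (leq_trans (leq_addl _ _) sz) ps2.
  exists s' => //; split => //.
  - by rewrite ls' last_cat.
  - by move=> z /ss' zs2; rewrite mem_cat inE zs2 !orbT.
  - move=> e /es' es2; rewrite /walk_edges pairmap_cat mem_cat /=.
    by rewrite inE es2 !orbT.
case: s a_s => [_ _ _|x s0 a_s sz /= /andP[rax ps0]]; first by exists [::].
have [s' ps' [ls' us' ss' es']] := IH x s0 sz ps0.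
exists (x :: s'); first by rewrite /= rax.
split => //.
- apply/andP; split => //; apply: contra a_s.
  by rewrite !inE => /orP[-> // | /ss' ->]; rewrite orbT.
- by move=> z; rewrite !inE => /orP[-> // | /ss' ->]; rewrite orbT.
- by move=> e; rewrite /= !inE => /orP[-> // | /es' ->]; rewrite orbT.
Qed.

Hypothesis r_sym : symmetric r.

Lemma rev_walk a s : path r a s -> exists2 s', path r (last a s) s' &
  last (last a s) s' = a /\ {subset walk_edges (last a s) s' <= walk_edges a s}.
Proof.
elim: s a => [|x s IH] a /=; first by exists [::].
move=> /andP[rax ps]; have [s' ps' [ls' es']] := IH x ps.
exists (rcons s' a); first by rewrite rcons_path ps' ls' r_sym.
split; first by rewrite last_rcons.
move=> e; rewrite /walk_edges -cats1 pairmap_cat mem_cat ls' => /orP[/es' ex|].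
  by rewrite /= inE ex orbT.
by rewrite /= !inE => /eqP->; rewrite finset.setUC eqxx.
Qed.

End Walks.

Lemma ler_sum_uniq_subset (R : numDomainType) (T : finType) (F : T -> R) (l : seq T)
    (S : {pred T}) :
  uniq l -> {subset l <= S} -> {in S, forall x, 0 <= F x} ->
  \sum_(x <- l) F x <= \sum_(x in S) F x.
Proof.
move=> ul lS F0; rewrite big_uniq // [leLHS]big_mkcond [leRHS]big_mkcond /=.
apply: ler_sum => x _; case: ifP => [xl | _]; first by rewrite (lS _ xl).
by case: ifP => // xS; exact: F0.
Qed.

Lemma sqr_sum_le_card (R : realFieldType) (T : finType) (S : {pred T}) (a : T -> R) :
  (\sum_(i in S) a i) ^+ 2 <= #|S|%:R * \sum_(i in S) a i ^+ 2.
Proof.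
have amgm i j : a i * a j <= (a i ^+ 2 + a j ^+ 2) / 2.
  by have := sqr_ge0 (a i - a j); rewrite sqrrB; lra.
rewrite expr2 mulr_suml; under eq_bigr do rewrite mulr_sumr.
apply: le_trans (ler_sum _ (fun i _ => ler_sum _ (fun j _ => amgm i j))) _.
rewrite le_eqVlt; apply/orP; left; apply/eqP.
under eq_bigr do rewrite -big_distrl /= big_split /= sumr_const.
rewrite -big_distrl big_split /= sumr_const sumrMnl -mulr2n.
by rewrite -[X in X / 2]mulr_natr mulfK ?pnatr_eq0 // mulr_natl.
Qed.

Section PushMetric.
Variables (R : realType) (V W : finType) (adjV : rel V) (adjW : rel W).
Variables (iota : V -> W) (rp : V -> V -> seq W).
Hypothesis adjW_sym : symmetric adjW.
Hypothesis adjV_irr : irreflexive adjV.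
Hypothesis rp_path : forall x y, adjV x y -> path adjW (iota x) (rp x y).
Hypothesis rp_last : forall x y, adjV x y -> last (iota x) (rp x y) = iota y.

Definition refined_edges x y : {set {set W}} := [set e in walk_edges (iota x) (rp x y)].

Definition edge_ends (e : {set V}) : option (V * V) :=
  [pick xy : V * V | adjV xy.1 xy.2 && (e == [set xy.1; xy.2]%SET)].

(* The paper's eInc_r(e); empty when e is not an edge. *)
Definition eInc (e : {set V}) : {set {set W}} :=
  if edge_ends e is Some xy then refined_edges xy.1 xy.2 else finset.set0.

Definition push_metric (m : {set W} -> R) (e : {set V}) : R := \sum_(e' in eInc e) m e'.

Lemma is_edge_eInc e e' : e' \in eInc e -> is_edge adjW e'.
Proof.
rewrite /eInc /edge_ends; case: pickP => [[x y] /andP[/= axy _]|_]; last by rewrite inE.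
by rewrite inE; apply: is_edge_walk_edges (rp_path axy).
Qed.

Variable m : {set W} -> R.
Hypothesis m_ge0 : forall e, is_edge adjW e -> 0 <= m e.

Lemma push_metric_ge0 e : 0 <= push_metric m e.
Proof. by apply: sumr_ge0 => e' /is_edge_eInc; exact: m_ge0. Qed.

(* The pick in [edge_ends] may orient the edge either way, hence the reversal. *)
Lemma lift_edge x y : adjV x y -> exists2 s, path adjW (iota x) s &
  last (iota x) s = iota y /\ \sum_(e <- walk_edges (iota x) s) m e <= push_metric m [set x; y].
Proof.
move=> axy; rewrite /push_metric /eInc /edge_ends.
case: pickP => [[x' y'] /= /andP[axy' /eqP E] | /(_ (x, y))]; last by rewrite /= axy eqxx.
have xy : x != y by apply: contraTneq axy => ->; rewrite adjV_irr.
have [s0 ps0 [ls0 es0]] : exists2 s0, path adjW (iota x) s0 & last (iota x) s0 = iota y /\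
    {subset walk_edges (iota x) s0 <= walk_edges (iota x') (rp x' y')}.
  case: (eq_set2_cases xy E) => -[-> ->].
    by exists (rp x' y'); [exact: rp_path | split => //; exact: rp_last].
  have [s' ps' [ls' es']] := rev_walk adjW_sym (rp_path axy').
  by rewrite rp_last // in ps' ls' es'; exists s'.
have [s ps [ls us _ es]] := uniq_subwalk ps0.
exists s => //; split; first by rewrite ls.
apply: ler_sum_uniq_subset; first exact: uniq_walk_edges.
  by move=> e /es /es0; rewrite inE.
by move=> e; rewrite inE => /(is_edge_walk_edges (rp_path axy')) /m_ge0.
Qed.

Lemma lift_walk v0 p : path adjV v0 p -> exists2 s, path adjW (iota v0) s &
  last (iota v0) s = iota (last v0 p) /\
  path_len m (iota v0) s <= path_len (push_metric m) v0 p.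
Proof.
elim: p v0 => [|x p IH] v0 /=; first by exists [::]; rewrite // /path_len !big_nil.
case/andP=> a ps; have [s1 ps1 [ls1 le1]] := lift_edge a.
have [s2 ps2 [ls2 le2]] := IH x ps.
exists (s1 ++ s2); first by rewrite cat_path ps1 ls1 ps2.
rewrite last_cat ls1 ls2; split => //.
by rewrite /path_len pairmap_cat big_cat ls1 big_cons lerD.
Qed.

Variable b : nat.
Hypothesis refined_edges_card : forall x y, adjV x y -> (#|refined_edges x y| <= b)%N.
Hypothesis refined_edges_disjoint : forall x y u v, adjV x y -> adjV u v ->
  [set x; y]%SET != [set u; v]%SET -> [disjoint refined_edges x y & refined_edges u v]%B.

Lemma card_eInc e : (#|eInc e| <= b)%N.
Proof.
rewrite /eInc /edge_ends; case: pickP => [[x y] /andP[/= axy _]|_]; last by rewrite cards0.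
exact: refined_edges_card.
Qed.

Lemma eInc_inj e1 e2 e' : e' \in eInc e1 -> e' \in eInc e2 -> e1 = e2.
Proof.
rewrite /eInc /edge_ends; case: pickP => [[x1 y1] /andP[/= a1 /eqP->]|_]; last by rewrite inE.
case: pickP => [[x2 y2] /andP[/= a2 /eqP->]|_]; last by move=> _; rewrite inE.
move=> in1 in2; apply/eqP; apply: contraT => ne.
by rewrite (disjointFr (refined_edges_disjoint a1 a2 ne) in1) in in2.
Qed.

Lemma area_push_metric_le : area adjV (push_metric m) <= b%:R * area adjW m.
Proof.
rewrite /area; apply: le_trans (_ : \sum_(e | is_edge adjV e)
    b%:R * \sum_(e' in eInc e) m e' ^+ 2 <= _).
  apply: ler_sum => e _; apply: le_trans (sqr_sum_le_card _ _) _.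
  apply: ler_wpM2r; first by apply: sumr_ge0 => *; exact: sqr_ge0.
  by rewrite ler_nat card_eInc.
rewrite -mulr_sumr ler_wpM2l // (exchange_big_dep predT) //= [leRHS]big_mkcond /=.
apply: ler_sum => e' _.
case: (pickP (fun e => is_edge adjV e && (e' \in eInc e))) => [e1 /andP[ie1 in1]|none].
  rewrite (bigD1 e1) /=; last by rewrite ie1 in1.
  rewrite big1 ?addr0 ?(is_edge_eInc in1) // => e /andP[/andP[_ ine] ne].
  by rewrite (eInc_inj ine in1) eqxx in ne.
by rewrite big_pred0 => [|e]; [case: ifP => _; rewrite ?sqr_ge0 | rewrite none].
Qed.

End PushMetric.

Lemma path_len_ge0 (R : realType) (V : finType) (adj : rel V) (m : {set V} -> R) v0 p :
  (forall e, is_edge adj e -> 0 <= m e) -> path adj v0 p -> 0 <= path_len m v0 p.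
Proof.
move=> m0 pp; rewrite /path_len big_seq.
by apply: sumr_ge0 => e /(is_edge_walk_edges pp) /m0.
Qed.

Section ExtremalLength.
Variables (R : realType) (V : finType) (adj : rel V) (B1 B2 : set V).

Lemma min_len_ge0 (m : {set V} -> R) :
  (forall e, is_edge adj e -> 0 <= m e) -> 0 <= min_len adj B1 B2 m.
Proof.
move=> m0; rewrite /min_len; set L := (X in inf X).
have [->|L0] := eqVneq L set0; first by rewrite inf0.
apply: lb_le_inf; first exact/set0P.
by move=> _ /= [v0 [p [[pp _ _] ->]]]; exact: (path_len_ge0 m0 pp).
Qed.

Lemma min_len_area_eq0 (m : {set V} -> R) : area adj m = 0 -> min_len adj B1 B2 m = 0.
Proof.
move=> /psumr_eq0P am0.
have me0 e : is_edge adj e -> m e = 0.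
  by move=> ie; apply/eqP; rewrite -sqrf_eq0; apply/eqP/am0 => // ? _; exact: sqr_ge0.
suff /subset_set1[] : [set l | exists v0 p, connecting adj B1 B2 v0 p /\
    l = path_len m v0 p] `<=` [set 0] by rewrite /min_len => ->; rewrite ?inf0 ?inf1.
move=> _ [v0 [p [[pp _ _] ->]]].
by rewrite /path_len big_seq big1 // => e /(is_edge_walk_edges pp) /me0.
Qed.

Lemma min_len_le_transfer (W : finType) (adjW : rel W) (C1 C2 : set W)
    (m : {set W} -> R) (M : {set V} -> R) :
  (forall e, is_edge adjW e -> 0 <= m e) -> (exists v0 p, connecting adj B1 B2 v0 p) ->
  (forall v0 p, connecting adj B1 B2 v0 p ->
     exists w0 s, connecting adjW C1 C2 w0 s /\ path_len m w0 s <= path_len M v0 p) ->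
  min_len adjW C1 C2 m <= min_len adj B1 B2 M.
Proof.
move=> m0 [v0 [p cp]] lift; apply: lb_le_inf; first by exists (path_len M v0 p), v0, p.
move=> _ [a [q [cq ->]]]; have [w0 [s [cs le_s]]] := lift a q cq.
apply: le_trans le_s; apply: ge_inf; last by exists w0, s.
by exists 0 => _ [? [? [[ps _ _] ->]]]; exact: (path_len_ge0 m0 ps).
Qed.

Lemma EEL_ge0 x y : adj x y -> (0 <= EEL R adj B1 B2)%E.
Proof.
move=> axy; pose one := fun _ : {set V} => 1 : R.
have ie : is_edge adj [set x; y]%SET.
  by apply/existsP; exists x; apply/existsP; exists y; rewrite axy eqxx.
have area1 : 0 < area adj one.
  rewrite /area (bigD1 _ ie) /= expr1n ltr_pwDl //.
  by apply: sumr_ge0 => *; exact: ler01.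
apply: le_trans (ereal_sup_ubound _); last by exists one; split => //; rewrite gt_eqF.
by rewrite lee_fin divr_ge0 ?sqr_ge0 ?ltW.
Qed.

End ExtremalLength.

Lemma EEL_le_transfer (R : realType) (V W : finType) (adjV : rel V) (adjW : rel W)
    (B1 B2 : set V) (C1 C2 : set W) (c : R) :
  (0 <= EEL R adjV B1 B2)%E ->
  (forall m, admissible_metric adjW m -> exists M : {set V} -> R,
     [/\ forall e, is_edge adjV e -> 0 <= M e, area adjV M <= c * area adjW m
       & min_len adjW C1 C2 m <= min_len adjV B1 B2 M]) ->
  (EEL R adjW C1 C2 <= c%:E * EEL R adjV B1 B2)%E.
Proof.
move=> EEL_V_ge0 transfer; apply: ge_ereal_sup => _ [m [m0 am_neq0] <-].
have [M [M0 aM_le len_le]] := transfer m (conj m0 am_neq0).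
set x := min_len adjW C1 C2 m; set y := min_len adjV B1 B2 M.
set am := area adjW m; set aM := area adjV M.
have am_gt0 : 0 < am by rewrite lt_def am_neq0; apply: sumr_ge0 => *; exact: sqr_ge0.
have aM_ge0 : 0 <= aM by apply: sumr_ge0 => *; exact: sqr_ge0.
have c_ge0 : 0 <= c by rewrite -(pmulr_lge0 _ am_gt0); exact: le_trans aM_ge0 aM_le.
have x_ge0 : 0 <= x := min_len_ge0 C1 C2 m0.
have [aM_eq0|aM_neq0] := eqVneq aM 0.
  have -> : x = 0 by apply/le_anti; rewrite x_ge0 andbT -(min_len_area_eq0 B1 B2 aM_eq0).
  by rewrite expr0n /= mul0r mule_ge0.
have aM_gt0 : 0 < aM by rewrite lt_def aM_neq0.
have ratio_M : ((y ^+ 2 / aM)%:E <= EEL R adjV B1 B2)%E.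
  by apply: ereal_sup_ubound; exists M.
apply: le_trans (lee_wpmul2l _ ratio_M); last by rewrite lee_fin.
rewrite -EFinM lee_fin ler_pdivrMr //.
have y2E : y ^+ 2 = y ^+ 2 / aM * aM by rewrite divfK.
apply: le_trans (_ : y ^+ 2 <= _); first by rewrite ler_sqr ?nnegrE //; exact: le_trans len_le.
by rewrite mulrAC mulrC [leLHS]y2E ler_wpM2l // divr_ge0 ?sqr_ge0 ?ltW.
Qed.

Section RefinedAnnulus.
Variables (R : realType) (A rA : tri_data R).
Variables (iota : tV A -> tV rA) (rp : tV A -> tV A -> seq (tV rA)).
Hypotheses (HA : is_comb_annulus A) (HrA : is_comb_annulus rA).
Hypothesis rp_path : forall x y, tadj A x y -> path (tadj rA) (iota x) (rp x y).
Hypothesis rp_arc : forall x y, tadj A x y ->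
  edge_img x y = \bigcup_(i in [set i | (i < size (rp x y))%N])
    edge_img (nth (iota x) (iota x :: rp x y) i) (nth (iota x) (rp x y) i).

Lemma refined_edge_sub x y e : tadj A x y -> e \in refined_edges iota rp x y ->
  exists a c, [/\ e = [set a; c]%SET, tadj rA a c & edge_img a c `<=` edge_img x y].
Proof.
move=> axy; rewrite inE => /(nthP finset.set0)[i]; rewrite size_pairmap => ilt.
rewrite (nth_pairmap (iota x)) // => <-.
exists (nth (iota x) (iota x :: rp x y) i), (nth (iota x) (rp x y) i); split => //.
  exact: (pathP (iota x) (rp_path axy)).
by rewrite (rp_arc axy) => q eq; exists i.
Qed.

Lemma refined_edges_disjoint x y u v : tadj A x y -> tadj A u v ->
  [set x; y]%SET != [set u; v]%SET ->
  [disjoint refined_edges iota rp x y & refined_edges iota rp u v]%B.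
Proof.
move=> axy auv ne; apply/pred0P => e /=; apply/negP => /andP[exy euv].
have [a [c [Ee aac sub_xy]]] := refined_edge_sub axy exy.
have [a' [c' [E _ sub_uv]]] := refined_edge_sub auv euv.
have [arc_ac _ _ _ _] := edge_arc HrA aac.
apply: (arc_img_not_finite (pos := tpos A) arc_ac) => q eq.
have q_uv : edge_img u v q.
  by apply: sub_uv; rewrite -(edge_img_set2 HrA aac (etrans (esym Ee) E)).
case: (edges_meet HA axy auv (sub_xy _ eq) q_uv) => [E' | [z ->]]; last by exists z.
by rewrite E' eqxx in ne.
Qed.

End RefinedAnnulus.

Unset Implicit Arguments.
Local Open Scope ereal_scope.

Theorem mainTheorem4 (R : realType) (A rA : tri_data R) (b : nat) :
  is_comb_annulus A -> is_comb_annulus rA ->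
  weakly_bounded_refinement A rA b ->
  EEL_ann rA <= ((b ^ 2)%:R)%:E * EEL_ann A.
Proof.
move=> HA HrA [iota [rp [[_ pos_iota [_ Jin_eq Jout_eq]] Hrp]]].
have rp_path x y : tadj A x y -> path (tadj rA) (iota x) (rp x y) by case/Hrp.
have rp_last x y : tadj A x y -> last (iota x) (rp x y) = iota y by case/Hrp.
have rp_arc x y := fun axy => let: And5 _ _ _ E _ := Hrp x y axy in E.
have rp_card x y := fun axy => let: And5 _ _ _ _ C := Hrp x y axy in C.
have [x [y axy]] := exists_tadj HA.
have EEL_A_ge0 := EEL_ge0 R (@bd_in R A) (@bd_out R A) axy.
apply: (le_trans (EEL_le_transfer (c := b%:R) EEL_A_ge0 _)).
  move=> m [m0 _]; exists (push_metric (tadj A) iota rp m); split.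
  - by move=> e _; exact: (push_metric_ge0 rp_path m0).
  - have rp_disj := refined_edges_disjoint HA HrA rp_path rp_arc.
    exact: (area_push_metric_le rp_path m rp_card rp_disj).
  - apply: (min_len_le_transfer m0 (exists_connecting HA)) => v0 p [pp in0 out0].
    have [s ps [ls len_le]] := lift_walk (tadj_sym HrA) (tadj_irr HA) rp_path rp_last m0 pp.
    exists (iota v0), s; split => //; split => //.
      by rewrite /bd_in /= pos_iota Jin_eq.
    by rewrite /bd_out /= ls pos_iota Jout_eq.
rewrite lee_wpmul2r // lee_fin ler_nat.
by case: (b) => // n; rewrite expnS expn1 leq_pmulr.
Qed.
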